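(* Let $B_n(t)=\sum_{k=0}^{n}\binom{n}{k}^2t^k$ for $n\ge0$ and $B_n(t)=0$ for $n<0$, and let $D_m(B(t);n)=\det(B_{i+j+m}(t))_{i,j=0}^{n-1}$. Then for every integer $m\ge1$: $D_{-m}(B(t);n)=0$ for $1\le n\le m$, and for $n\ge m+1$ $$D_{-m}(B(t);n)=(-1)^{\binom{m+1}{2}}\,(2t)^{\,n-m-1}\,p_{m+1}(t,n-m-1)$$ as an identity of polynomials in $t$.
   Context: The Narayana polynomials are $C_0(t)=1$ and $C_n(t)=\sum_{k=0}^{n-1}\binom{n-1}{k}\binom{n}{k}\frac{1}{k+1}t^k$ for $n\ge1$, extended by $C_n(t)=0$ for $n<0$. For integers $m,n\ge0$, $p_m(t,n)=\det(C_{i+j+m}(t))_{i,j=0}^{n-1}$ (the $0\times0$ determinant being $1$). It is known that $\sum_{n\ge0}B_n(t)x^n=\frac{1}{\sqrt{(1-(1+t)x)^2-4tx^2}}$. *)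

From HB Require Import structures.
From mathcomp Require Import all_boot all_order all_algebra.
Set Implicit Arguments. Unset Strict Implicit. Unset Printing Implicit Defensive.
Import Order.TTheory GRing.Theory Num.Theory.
Local Open Scope ring_scope.

Definition Bnat (n : nat) : {poly rat} :=
  \sum_(k < n.+1) (('C(n, k) ^ 2)%N)%:R *: 'X^k.

Definition B (n : int) : {poly rat} :=
  match n with Posz k => Bnat k | Negz _ => 0 end.

Definition DB (m : int) (n : nat) : {poly rat} :=
  \det (\matrix_(i < n, j < n) B ((i : nat)%:Z + (j : nat)%:Z + m)).

Definition Nara (n : nat) : {poly rat} :=
  if n is 0 then 1
  else \sum_(k < n) ((('C(n.-1, k) * 'C(n, k))%N)%:R / (k.+1)%:R) *: 'X^k.

Definition pN (m n : nat) : {poly rat} :=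
  \det (\matrix_(i < n, j < n) Nara (i + j + m)).

From HB Require Import structures.
From mathcomp Require Import all_boot all_order all_algebra.
From mathcomp Require Import ring lra zify.
Import Order.TTheory GRing.Theory Num.Theory.
Set Implicit Arguments. Unset Strict Implicit. Unset Printing Implicit Defensive.
Local Open Scope ring_scope.

(* Let Delta(x) = (1 - (1+t)x)^2 - 4tx^2, so that sum_n B_n x^n = Delta^(-1/2).
   The reciprocal series Delta^(1/2) = sum_p g_p x^p has g_0 = 1,
   g_1 = -(1+t) and g_(p+2) = -2t C_(p+1)(t) (Narayana polynomials).  We avoid
   square roots: the three-term recurrences of B_n and of C_n say exactly that
   A = sum B_n x^n and G = sum g_p x^p satisfy, to any finite order,
   Delta A' + (Delta'/2) A = 0 and Delta G' - (Delta'/2) G = 0.  Hence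
   Delta (GA)' = 0, so GA = 1: sum_j g_j B_(p-j) = [p = 0].

   For the determinant, let T = (g_(i-j)) be lower unitriangular and
   H = (B_(i+j-m)) the Hankel matrix of size m+1+N.  By the convolution
   identity, TH is block upper triangular: its top-left (m+1)-block is the
   exchange matrix (determinant (-1)^C(m+1,2)), its bottom-left block vanishes
   and its bottom-right block is 2t (C_(i+j+m+1)) U with U = (B_(j-i))
   upper unitriangular.  For 1 <= n <= m the first row of H is zero. *)

Lemma coef_Bnat n r : (Bnat n)`_r = ('C(n, r) ^ 2)%N%:R.
Proof.
rewrite /Bnat -(poly_def _ (fun k => ('C(n, k) ^ 2)%N%:R)) coef_poly ltnS.
by case: leqP => // ltnr; rewrite bin_small.
Qed.

Lemma coef_Nara p r :
  (Nara p.+1)`_r = ('C(p, r) * 'C(p.+1, r))%N%:R / r.+1%:R.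
Proof.
rewrite /Nara -(poly_def _ (fun k => ('C(p, k) * 'C(p.+1, k))%N%:R / k.+1%:R)).
rewrite coef_poly ltnS.
by case: leqP => // ltpr; rewrite bin_small // mul0n mul0r.
Qed.

Lemma Bnat0 : Bnat 0 = 1.
Proof. by apply/polyP => -[|r]; rewrite coef_Bnat coef1. Qed.

Lemma Bnat1 : Bnat 1 = 1 + 'X.
Proof. by apply/polyP => -[|[|r]]; rewrite coef_Bnat coefD coef1 coefX. Qed.

Lemma Nara1 : Nara 1 = 1.
Proof. by apply/polyP => -[|r]; rewrite coef_Nara coef1 ?mul0r // divr1. Qed.

Lemma Nara2 : Nara 2 = 1 + 'X.
Proof.
apply/polyP => -[|[|r]]; rewrite coef_Nara coefD coef1 coefX ?divr1 //.
by rewrite bin_small // mul0n mul0r.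
Qed.

(* Two ways of expressing a binomial coefficient through one with a larger
   top index; they reduce the recurrences below to rational identities. *)
Lemma natr_bin_pred_top (M r : nat) :
  'C(M, r)%:R = 'C(M.+1, r)%:R * (M.+1%:R - r%:R) / M.+1%:R :> rat.
Proof.
have [lerM|ltMr] := leqP r M.+1; last by rewrite !bin_small ?mul0r // ltnW.
apply: (mulIf (x := M.+1%:R)); first by rewrite pnatr_eq0.
by rewrite divfK ?pnatr_eq0 // -natrB // -!natrM mulnC (mul_bin_down M.+1) mulnC.
Qed.

Lemma natr_bin_pred (M r : nat) :
  'C(M, r)%:R = 'C(M.+1, r.+1)%:R * r.+1%:R / M.+1%:R :> rat.
Proof.
apply: (mulIf (x := M.+1%:R)); first by rewrite pnatr_eq0.
by rewrite divfK ?pnatr_eq0 // -!natrM mulnC (mul_bin_diag M.+1) mulnC.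
Qed.

(* Three-term recurrences: B_n are (up to the change of variables)
   Legendre polynomials, and C_(q+1) satisfy the same kind of recurrence. *)
Lemma Bnat_rec n :
  n.+2%:R * Bnat n.+2 - (2 * n + 3)%:R * (1 + 'X) * Bnat n.+1
    + n.+1%:R * (1 - 'X) ^+ 2 * Bnat n = 0.
Proof.
apply/polyP => r; rewrite coef0.
have -> : n.+2%:R * Bnat n.+2 - (2 * n + 3)%:R * (1 + 'X) * Bnat n.+1
    + n.+1%:R * (1 - 'X) ^+ 2 * Bnat n =
  Bnat n.+2 *+ n.+2 - (Bnat n.+1 + 'X * Bnat n.+1) *+ (2 * n + 3)
    + (Bnat n - 'X * Bnat n *+ 2 + 'X * ('X * Bnat n)) *+ n.+1 by ring.
rewrite !(coefD, coefN, coefMn, coefXM) !coef_Bnat.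
case: r => [|[|s]] /=; first by rewrite !bin0; ring.
  by rewrite !bin0 !bin1; ring.
rewrite !natrX (natr_bin_pred_top n s.+2) (natr_bin_pred_top n s.+1).
rewrite (natr_bin_pred n s) (natr_bin_pred_top n.+1 s.+2) (natr_bin_pred n.+1 s.+1).
have n_ge0 := ler0n rat n; field; repeat (apply/andP; split); apply: lt0r_neq0; lra.
Qed.

Lemma Nara_rec q :
  q.+4%:R * Nara q.+3 - (2 * q + 5)%:R * (1 + 'X) * Nara q.+2
    + q.+1%:R * (1 - 'X) ^+ 2 * Nara q.+1 = 0.
Proof.
apply/polyP => r; rewrite coef0.
have -> : q.+4%:R * Nara q.+3 - (2 * q + 5)%:R * (1 + 'X) * Nara q.+2
    + q.+1%:R * (1 - 'X) ^+ 2 * Nara q.+1 =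
  Nara q.+3 *+ q.+4 - (Nara q.+2 + 'X * Nara q.+2) *+ (2 * q + 5)
    + (Nara q.+1 - 'X * Nara q.+1 *+ 2 + 'X * ('X * Nara q.+1)) *+ q.+1 by ring.
rewrite !(coefD, coefN, coefMn, coefXM) !coef_Nara.
have q_ge0 := ler0n rat q.
case: r => [|[|s]] /=; first by rewrite !bin0; field.
  by rewrite !bin0 !bin1; field.
have s_ge0 := ler0n rat s.
rewrite !natrM (natr_bin_pred_top q s.+2) (natr_bin_pred q s.+1) (natr_bin_pred q s).
rewrite (natr_bin_pred_top q.+1 s.+2) (natr_bin_pred q.+1 s.+1) (natr_bin_pred q.+1 s).
rewrite (natr_bin_pred q.+2 s.+1) (natr_bin_pred_top q.+2 s.+2).
field; repeat (apply/andP; split); apply: lt0r_neq0; lra.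
Qed.

(* Power series are represented by polynomials, of which only the
   coefficients below a given order K are meaningful. *)
Section TruncatedSeries.
Variable R : comNzRingType.
Implicit Types (A D E G P Q : {poly R}) (K : nat).

Definition vanishes_below K P := forall n, (n < K)%N -> P`_n = 0.

Lemma vanishes_belowD K P Q :
  vanishes_below K P -> vanishes_below K Q -> vanishes_below K (P + Q).
Proof. by move=> P0 Q0 n ltnK; rewrite coefD P0 ?Q0 ?addr0. Qed.

Lemma vanishes_belowMl K P Q : vanishes_below K P -> vanishes_below K (Q * P).
Proof.
move=> P0 n ltnK; rewrite coefM big1 // => i _.
by rewrite P0 ?mulr0 // (leq_ltn_trans (leq_subr _ _) ltnK).
Qed.

Lemma vanishes_below_unit K D P :
  D`_0 = 1 -> vanishes_below K (D * P) -> vanishes_below K P.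
Proof.
move=> D0 DP0; elim/ltn_ind => n IHn ltnK.
have := DP0 n ltnK; rewrite coefM big_ord_recl D0 subn0 mul1r big1 ?addr0 // => i _.
by rewrite IHn ?mulr0 ?(ltn_trans _ ltnK) // subnSK // leq_subr.
Qed.

Lemma vanishes_below_deriv_mul K D E A G :
    vanishes_below K (D * A^`() + E * A) ->
    vanishes_below K (D * G^`() - E * G) ->
  vanishes_below K (D * (G * A)^`()).
Proof.
move=> odeA odeG.
have -> : D * (G * A)^`() = A * (D * G^`() - E * G) + G * (D * A^`() + E * A).
  by rewrite derivM; ring.
by apply: vanishes_belowD; apply: vanishes_belowMl.
Qed.

End TruncatedSeries.

Definition c1 : {poly rat} := 1 + 'X.
Definition c2 : {poly rat} := (1 - 'X) ^+ 2.

Definition Delta : {poly {poly rat}} := 1 - (2 * c1)%:P * 'X + c2%:P * 'X^2.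
Definition halfDelta' : {poly {poly rat}} := - c1%:P + c2%:P * 'X.

Lemma coef_DeltaM (Z : {poly {poly rat}}) n :
  (Delta * Z)`_n = Z`_n - 2 * c1 * (if n is k.+1 then Z`_k else 0)
                     + c2 * (if n is k.+2 then Z`_k else 0).
Proof.
rewrite /Delta !mulrDl mulNr mul1r -!mulrA !coefD coefN !coefCM !coefXM.
by case: n => [|[|n]] /=; rewrite /c2; ring.
Qed.

Lemma coef_halfDelta'M (Z : {poly {poly rat}}) n :
  (halfDelta' * Z)`_n = - c1 * Z`_n + c2 * (if n is k.+1 then Z`_k else 0).
Proof.
rewrite /halfDelta' !mulrDl mulNr -!mulrA coefD coefN !coefCM coefXM.
by case: n => [|n] /=; rewrite /c2; ring.
Qed.

Lemma Delta_coef0 : Delta`_0 = 1.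
Proof. by rewrite -[Delta]mulr1 coef_DeltaM coef1 /=; ring. Qed.

(* The coefficients g_p of Delta^(1/2). *)
Definition gcoef (p : nat) : {poly rat} :=
  match p with 0 => 1 | 1 => - c1 | q.+2 => - (2%:P * 'X) * Nara q.+1 end.

Lemma gcoefSS q : gcoef q.+2 = - (2%:P * 'X) * Nara q.+1.
Proof. by []. Qed.

Definition Bseries K : {poly {poly rat}} := \poly_(i < K.+1) Bnat i.
Definition gseries K : {poly {poly rat}} := \poly_(i < K.+1) gcoef i.

Lemma coef_Bseries K i : (i <= K)%N -> (Bseries K)`_i = Bnat i.
Proof. by move=> leiK; rewrite coef_poly ltnS leiK. Qed.

Lemma coef_gseries K i : (i <= K)%N -> (gseries K)`_i = gcoef i.
Proof. by move=> leiK; rewrite coef_poly ltnS leiK. Qed.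

(* The recurrence of B_n is the differential equation of Delta^(-1/2). *)
Lemma Bseries_ode K :
  vanishes_below K (Delta * (Bseries K)^`() + halfDelta' * Bseries K).
Proof.
move=> n ltnK; rewrite coefD coef_DeltaM coef_halfDelta'M.
case: n ltnK => [|[|m]] ltnK; rewrite !coef_deriv !coef_Bseries; try lia.
- by rewrite Bnat0 Bnat1 /c1; ring.
- by rewrite -[RHS](Bnat_rec 0) /c1 /c2; ring.
- by rewrite -[RHS](Bnat_rec m.+1) /c1 /c2; ring.
Qed.

(* The recurrence of C_n is the differential equation of Delta^(1/2). *)
Lemma gseries_ode K :
  vanishes_below K (Delta * (gseries K)^`() - halfDelta' * gseries K).
Proof.
move=> n ltnK; rewrite coefD coefN coef_DeltaM coef_halfDelta'M.
case: n ltnK => [|[|[|m]]] ltnK; rewrite !coef_deriv !coef_gseries; try lia; cbn [gcoef].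
- by rewrite /c1; ring.
- by rewrite Nara1 /c1 /c2; ring.
- by rewrite Nara1 Nara2 /c1; ring.
- by rewrite -[RHS](mulr0 (- (2%:P * 'X))) -[in RHS](Nara_rec m) /c1 /c2; ring.
Qed.

(* In characteristic 0, a vanishing nonzero multiple forces vanishing; it
   recovers a series from its derivative. *)
Lemma mulrnS_eq0 (F : numFieldType) (V : lmodType F) (v : V) n :
  v *+ n.+1 = 0 -> v = 0.
Proof. by move/eqP; rewrite -scaler_nat scaler_eq0 pnatr_eq0 => /eqP. Qed.

Lemma gcoef_convB p : \sum_(j < p.+1) gcoef j * Bnat (p - j) = (p == 0)%:R.
Proof.
case: p => [|q]; first by rewrite big_ord1 Bnat0 mulr1.
pose W := gseries q.+1 * Bseries q.+1.
have W'0 : vanishes_below q.+1 W^`().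
  apply: (vanishes_below_unit Delta_coef0).
  by apply: vanishes_below_deriv_mul; [apply: Bseries_ode | apply: gseries_ode].
have /mulrnS_eq0 W0 : W`_q.+1 *+ q.+1 = 0 by rewrite -coef_deriv W'0.
rewrite -[RHS]W0 coefM; apply: eq_bigr => j _.
by rewrite coef_gseries ?coef_Bseries ?leq_subr // -ltnS.
Qed.

Lemma gcoef_convB_rev p : \sum_(l < p.+1) gcoef (p - l) * Bnat l = (p == 0)%:R.
Proof.
rewrite -(gcoef_convB p) (reindex_inj rev_ord_inj); apply: eq_bigr => l _.
by rewrite /= subSS subKn // -ltnS.
Qed.

(* Partial convolutions sum_(l <= i) g_(i-l) B_(l+j-m) (with B_k = 0 for
   k < 0): these are the entries of T H.  When j <= m the sum is complete. *)
Lemma partial_convB_low i j m : (j <= m)%N ->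
  \sum_(l < i.+1) gcoef (i - l) * (if (m <= l + j)%N then Bnat (l + j - m) else 0)
  = (i + j == m)%:R.
Proof.
move=> lejm; have [ltid|leid] := ltnP i (m - j).
  rewrite big1 => [|l _]; last by rewrite ifF ?mulr0 //; have := ltn_ord l; lia.
  by have -> : (i + j == m) = false by apply/eqP; lia.
rewrite -(subnKC leid) -addnS big_split_ord /= big1 ?add0r => [|l _]; last first.
  by rewrite ifF ?mulr0 //; have := ltn_ord l; lia.
have -> : (m - j + (i - (m - j)) + j == m)%N = (i - (m - j) == 0)%N.
  by apply/eqP/eqP; lia.
rewrite -gcoef_convB_rev; apply: eq_bigr => l _; rewrite ifT; last by lia.
by congr (gcoef _ * Bnat _); lia.
Qed.

(* When j > m the first j - m terms of the full convolution are missing. *)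
Lemma partial_convB_high i j m : (m < j)%N ->
  \sum_(l < i.+1) gcoef (i - l) * (if (m <= l + j)%N then Bnat (l + j - m) else 0)
  = - \sum_(k < j - m) gcoef (i + (j - m) - k) * Bnat k.
Proof.
move=> ltmj; have := gcoef_convB_rev (i + (j - m)).
have -> : (i + (j - m) == 0)%N = false by apply/eqP; lia.
have -> : (i + (j - m)).+1 = (j - m + i.+1)%N by lia.
rewrite big_split_ord /= => /eqP; rewrite addrC addr_eq0 => /eqP <-.
apply: eq_bigr => l _; rewrite ifT; last by lia.
by congr (gcoef _ * Bnat _); lia.
Qed.

Lemma gcoef_tail a j :
  - \sum_(k < j.+1) gcoef (a.+1 + j.+1 - k) * Bnat k
  = \sum_(r < j.+1) 2%:P * 'X * Nara (a + r).+1 * Bnat (j - r).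
Proof.
rewrite -sumrN (reindex_inj rev_ord_inj); apply: eq_bigr => r _.
have -> : (rev_ord r : nat) = (j - r)%N by rewrite /= subSS.
have -> : (a.+1 + j.+1 - (j - r))%N = (a + r).+2 by have := ltn_ord r; lia.
by rewrite gcoefSS !mulNr opprK.
Qed.

Lemma sum_ord_trunc (V : nmodType) n k (F : nat -> V) : (k < n)%N ->
  \sum_(l < n) (if (l <= k)%N then F l else 0) = \sum_(l < k.+1) F l.
Proof. by move=> ltkn; rewrite (big_ord_widen n F ltkn) [RHS]big_mkcond. Qed.

Definition exchange_mx (R : nzRingType) k : 'M[R]_k :=
  \matrix_(i, j) ((i + j).+1 == k)%:R.

Lemma det_exchange_mx (R : comNzRingType) k :
  \det (exchange_mx R k) = (-1) ^+ 'C(k, 2).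
Proof.
elim: k => [|k IHk]; first by rewrite det_mx00.
rewrite (expand_det_row _ ord0) (bigD1 ord_max) //= big1 ?addr0 => [|j neq_j_max].
  rewrite mxE /= add0n eqxx mul1r /cofactor add0n.
  have -> : row' ord0 (col' ord_max (exchange_mx R k.+1)) = exchange_mx R k.
    by apply/matrixP => i j; rewrite !mxE lift0 lift_max /= addSn.
  by rewrite IHk -exprD binS bin1 addnC.
rewrite mxE /= add0n eqSS.
have /negPf -> : (j : nat) != k.
  by apply: contra neq_j_max => /eqP eq_jk; apply/eqP/val_inj.
by rewrite mul0r.
Qed.

(* T = (g_(i-j)), H = (B_(i+j-m)) (so DB (-m) n = det H), the Narayana
   Hankel matrix (so pN m n = det (Narahankel m n)) and U = (B_(j-i)). *)
Definition gToeplitz n : 'M[{poly rat}]_n :=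
  \matrix_(i, j) (if (j <= i)%N then gcoef (i - j) else 0).

Definition Bhankel m n : 'M[{poly rat}]_n :=
  \matrix_(i, j) B ((i : nat)%:Z + (j : nat)%:Z + - (m%:Z)).

Definition Narahankel m n : 'M[{poly rat}]_n := \matrix_(i, j) Nara (i + j + m).

Definition Bupper n : 'M[{poly rat}]_n :=
  \matrix_(i, j) (if (i <= j)%N then Bnat (j - i) else 0).

Lemma det_gToeplitz n : \det (gToeplitz n) = 1.
Proof.
rewrite det_trig; last by apply/is_trig_mxP => i j ltij; rewrite mxE leqNgt ltij.
by apply: big1 => i _; rewrite mxE leqnn subnn.
Qed.

Lemma det_Bupper n : \det (Bupper n) = 1.
Proof.
rewrite -det_tr det_trig; last by apply/is_trig_mxP => i j ltij; rewrite !mxE leqNgt ltij.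
by apply: big1 => i _; rewrite !mxE leqnn subnn Bnat0.
Qed.

Lemma B_shift (i j m : nat) :
  B (i%:Z + j%:Z + - m%:Z) = if (m <= i + j)%N then Bnat (i + j - m) else 0.
Proof.
case: leqP => [lemij|ltijm]; first by rewrite -PoszD subzn.
suff -> : i%:Z + j%:Z + - m%:Z = Negz (m - (i + j)).-1 by [].
by rewrite NegzE prednK ?subn_gt0 // -PoszD -opprB subzn // ltnW.
Qed.

Lemma gToeplitz_Bhankel_entry m n (i j : 'I_n) :
  (gToeplitz n *m Bhankel m n) i j =
  \sum_(l < i.+1) gcoef (i - l) * (if (m <= l + j)%N then Bnat (l + j - m) else 0).
Proof.
pose F l := gcoef (i - l) * (if (m <= l + j)%N then Bnat (l + j - m) else 0).
rewrite mxE -(sum_ord_trunc F (ltn_ord i)).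
by apply: eq_bigr => l _; rewrite !mxE B_shift; case: ifP; rewrite ?mul0r.
Qed.

Definition reducedB m N := gToeplitz (m.+1 + N) *m Bhankel m (m.+1 + N).

Lemma reducedB_ul m N : ulsubmx (reducedB m N) = exchange_mx _ m.+1.
Proof.
apply/matrixP => i j; rewrite [LHS]mxE [LHS]mxE /reducedB.
rewrite (gToeplitz_Bhankel_entry m (lshift N i)) [RHS]mxE /=.
by rewrite partial_convB_low ?eqSS // -ltnS.
Qed.

Lemma reducedB_dl m N : dlsubmx (reducedB m N) = 0.
Proof.
apply/matrixP => i j; rewrite [LHS]mxE [LHS]mxE /reducedB.
rewrite (gToeplitz_Bhankel_entry m (rshift m.+1 i)) partial_convB_low /=.
  by rewrite mxE; have -> : (m.+1 + i + j == m)%N = false by apply/eqP; lia.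
by rewrite -ltnS.
Qed.

Lemma reducedB_dr m N :
  drsubmx (reducedB m N) = ((2%:P * 'X) *: Narahankel m.+1 N) *m Bupper N.
Proof.
apply/matrixP => i j; rewrite [LHS]mxE [LHS]mxE /reducedB.
rewrite (gToeplitz_Bhankel_entry m (rshift m.+1 i)) partial_convB_high /=; last first.
  by rewrite ltnS leq_addr.
pose F r := 2%:P * 'X * Nara (m + i + r).+1 * Bnat (j - r).
rewrite [RHS]mxE (eq_bigr (fun r : 'I_N => if (r <= j)%N then F r else 0)).
  have -> : (m.+1 + j - m = j.+1)%N by lia.
  by rewrite sum_ord_trunc // addSn gcoef_tail.
move=> r _; rewrite !mxE; case: ifP => _; last by rewrite mulr0.
by rewrite /F addnS addnC addnA.
Qed.

Lemma det_Bhankel_large m N :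
  \det (Bhankel m (m.+1 + N)) = (-1) ^+ 'C(m.+1, 2) * (2%:P * 'X) ^+ N * pN m.+1 N.
Proof.
have -> : \det (Bhankel m (m.+1 + N)) = \det (reducedB m N).
  by rewrite det_mulmx det_gToeplitz mul1r.
rewrite -[reducedB m N]submxK reducedB_dl det_ublock reducedB_ul reducedB_dr.
by rewrite det_exchange_mx det_mulmx detZ det_Bupper mulr1 mulrA.
Qed.

(* Size 1 <= n <= m: the first row B_(j-m), j < n, is zero. *)
Lemma det_Bhankel_small m n : (0 < n <= m)%N -> \det (Bhankel m n) = 0.
Proof.
case: n => // n /= lenm; rewrite (expand_det_row _ ord0) big1 // => j _.
by rewrite mxE B_shift ifN ?mul0r // -ltnNge /= add0n (leq_trans (ltn_ord j)).
Qed.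

Theorem theorem9 (m : nat) : (1 <= m)%N ->
  (forall n : nat, (1 <= n <= m)%N -> DB (- (m%:Z)) n = 0) /\
  (forall n : nat, (m.+1 <= n)%N ->
     DB (- (m%:Z)) n =
       (-1) ^+ 'C(m.+1, 2) * (2%:P * 'X) ^+ (n - m.+1) * pN m.+1 (n - m.+1)).
Proof.
move=> _; split; first exact: det_Bhankel_small.
by move=> n /subnKC {1}<-; apply: det_Bhankel_large.
Qed.
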